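(* Fix $k\ge3$. Consider the recursive network formation model with the utility function described in the context. Instead of a single node, the process starts from the base graph for the $k$-star: $2k$ nodes, namely $k$ pairwise adjacent centers, each also adjacent to exactly one distinct leaf. Suppose $$\gamma=0,\qquad c=b_1-b_3,\qquad b_2-b_3<c_0<b_2-b_4.$$ Then the resulting topology is a $k$-star: for every $n\ge 2k$, the pairwise stable network reached when the network has $n$ nodes is a $k$-star network on $n$ nodes, irrespective of the random order in which nodes are selected to move.
   Context: A $k$-star network ($k\ge3$) on $n\ge 2k$ nodes consists of $k$ ''center'' nodes that are pairwise adjacent, forming a clique. Every other node is a leaf adjacent to exactly one center and to nothing else. Each center has at least one leaf, and the numbers of leaves of any two centers differ by at most one. Networks are finite simple undirected graphs whose vertices (nodes) are self-interested agents. Parameters: benefits $b_1>b_2>b_3>b_4>\dots>0$, where $b_i$ is the benefit a node obtains from a node at distance $i$; a link cost $c$ per immediate neighbor; an intermediation fraction $\gamma$ with $0\le\gamma<1$; and a network entry factor $c_0$. Notation: $N$ is the set of nodes currently in the network, $d_j$ the degree of $j$, and $l(j,w)$ the graph distance. A node $x$ is essential for a pair $y,z$ (with $x\notin\{y,z\}$) if $x$ lies on every path joining $y$ and $z$. Write $E(y,z)$ for the set of nodes essential for $y,z$ and $e(y,z)=|E(y,z)|$. Only pairs joined by a path contribute to the sums below. Utility of node $j$ in network $g$: $$u_j(g)=-c_0\,d_{T(j)}\mathbf 1_{\{j=\mathrm{NE}\}}+d_j(b_1-c)+\sum_{w\in N,\ l(j,w)>1}b_{l(j,w)}-\sum_{w\in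 N,\ E(j,w)\ne\emptyset}\gamma\, b_{l(j,w)}+\sum_{y,z\in N,\ j\in E(y,z)}\frac{\gamma}{e(y,z)}\,2\,b_{l(y,z)}.$$ Here $\mathbf 1_{\{j=\mathrm{NE}\}}=1$ exactly when $j$ is a newly entering node evaluating the creation of its first link. $T(j)$ is the existing node to which $j$ forms that first link, and $d_{T(j)}$ is that node's degree before the link. The network before entry gives the entering node utility $0$. Pairwise stability: $g$ is pairwise stable if (a) for every link $(i,j)\in g$, $u_i(g\setminus\{(i,j)\})\le u_i(g)$ and $u_j(g\setminus\{(i,j)\})\le u_j(g)$; and (b) for every non-link $(i,j)\notin g$, if $u_i(g\cup\{(i,j)\})>u_i(g)$ then $u_j(g\cup\{(i,j)\})<u_j(g)$. Recursive model of network formation (from a given base graph): - When the current network of $n-1$ nodes is pairwise stable, a new node considers entering. Its options are to stay out or to propose a link to one existing node. The link forms iff the receiving node's utility does not decrease. No existing node can link to the newcomer before it has formed this first link. - After entry, nodes are repeatedly chosen at random to move. A chosen node plays a myopic best response among three options: create a link with a non-neighbor (the link forms only if the other node's utility does not decrease, which the proposer anticipates); delete a link with a neighbor (unilaterally); or keep the status quo. It alters a link only if this strictly increases its current utility. - This continues until the network is pairwise stable; then the next node considers entering, and so on. *)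

From HB Require Import structures.
From mathcomp Require Import all_boot all_order all_algebra.
From Stdlib Require Import Relations.
Set Implicit Arguments. Unset Strict Implicit. Unset Printing Implicit Defensive.
Import Order.TTheory GRing.Theory Num.Theory.
Local Open Scope ring_scope.

(* A network: nodes are 0, ..., nn-1; [adj] is an (un-normalised) adjacency
   function, only read through [edge] below. *)
Record net := Net { nn : nat; adj : nat -> nat -> bool }.

Definition nodes (g : net) : seq nat := iota 0 (nn g).

Definition edge (g : net) (x y : nat) : bool :=
  [&& (x < nn g)%N, (y < nn g)%N, x != y & adj g x y || adj g y x].

Definition deg (g : net) (j : nat) : nat := count (edge g j) (nodes g).

(* walkin e ns m x y : there is a walk of length <= m from x to y along e,
   through nodes of ns *)
Fixpoint walkin (e : rel nat) (ns : seq nat) (m : nat) (x y : nat) : bool :=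
  if m is m'.+1 then
    walkin e ns m' x y || has (fun z => walkin e ns m' x z && e z y) ns
  else (x == y) && (x \in ns).

Definition conn (g : net) (y z : nat) : bool := walkin (edge g) (nodes g) (nn g) y z.

(* graph distance l(y,z) (only meaningful when conn g y z) *)
Definition dist (g : net) (y z : nat) : nat :=
  find (fun m => walkin (edge g) (nodes g) m y z) (iota 0 (nn g)).

(* x is essential for y,z: x not in {y,z}, y and z are joined by a path,
   and every path joining y and z passes through x (i.e. there is no path
   from y to z avoiding x). *)
Definition ess (g : net) (x y z : nat) : bool :=
  [&& x != y, x != z, conn g y z &
      ~~ walkin (fun a b => [&& edge g a b, a != x & b != x]) (nodes g) (nn g) y z].

Definition ecount (g : net) (y z : nat) : nat := count (fun x => ess g x y z) (nodes g).

Section Utility.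
Variable R : realFieldType.
Variables (b : nat -> R) (c gam : R).

(* utility of an existing node j in g (without the entry term) *)
Definition util (g : net) (j : nat) : R :=
  (deg g j)%:R * (b 1%N - c)
  + \sum_(w <- nodes g | conn g j w && (1 < dist g j w)%N) b (dist g j w)
  - \sum_(w <- nodes g | has (fun x => ess g x j w) (nodes g)) gam * b (dist g j w)
  + \sum_(y <- nodes g) \sum_(z <- nodes g | (y < z)%N && ess g j y z)
        gam / (ecount g y z)%:R * 2%:R * b (dist g y z).

Definition same_pair (i j x y : nat) : bool :=
  ((x == i) && (y == j)) || ((x == j) && (y == i)).

Definition add_link (g : net) (i j : nat) : net :=
  Net (nn g) (fun x y => adj g x y || same_pair i j x y).

Definition del_link (g : net) (i j : nat) : net :=
  Net (nn g) (fun x y => adj g x y && ~~ same_pair i j x y && ~~ same_pair i j y x).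

Definition pairwise_stable (g : net) : Prop :=
  (forall i j, edge g i j ->
     util (del_link g i j) i <= util g i /\ util (del_link g i j) j <= util g j) /\
  (forall i j, (i < nn g)%N -> (j < nn g)%N -> i != j -> ~~ edge g i j ->
     util g i < util (add_link g i j) i -> util (add_link g i j) j < util g j).

(* options of node i in a myopic best response (other than the status quo) *)
Definition move_option (g : net) (i : nat) (g' : net) : Prop :=
  (exists j, (j < nn g)%N /\ j != i /\ ~~ edge g i j /\
     util g j <= util (add_link g i j) j /\ g' = add_link g i j) \/
  (exists j, edge g i j /\ g' = del_link g i j).

(* node i, chosen to move, plays a myopic best response that strictly
   increases its utility (ties between maximisers broken arbitrarily) *)
Definition move_step (g g' : net) : Prop :=
  ~ pairwise_stable g /\
  exists i, (i < nn g)%N /\ move_option g i g' /\ util g i < util g' i /\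
    (forall g'', move_option g i g'' -> util g'' i <= util g' i).

Definition enter (g : net) (T : nat) : net :=
  add_link (Net (nn g).+1 (fun x y => [&& adj g x y, (x < nn g)%N & (y < nn g)%N]))
           (nn g) T.

Definition accepts (g : net) (T : nat) : Prop :=
  (T < nn g)%N /\ util g T <= util (enter g T) T.

Variable c0 : R.

Definition entry_value (g : net) (T : nat) : R :=
  - c0 * (deg g T)%:R + util (enter g T) (nn g).

(* when g is pairwise stable, a newcomer enters by proposing a link to an
   accepting node T that is a best response, better than staying out (0) *)
Definition entry_step (g g' : net) : Prop :=
  pairwise_stable g /\
  exists T, accepts g T /\ 0 < entry_value g T /\
    (forall T', accepts g T' -> entry_value g T' <= entry_value g T) /\
    g' = enter g T.

Definition step (g g' : net) : Prop := move_step g g' \/ entry_step g g'.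

End Utility.

Definition kstar_base (k : nat) : net :=
  Net (k + k)%N (fun x y => [&& (x < k)%N, (y < k)%N & x != y] || [&& (x < k)%N & y == x + k]).

Definition leaf_count (g : net) (cen : seq nat) (x : nat) : nat :=
  count (fun w => (w \notin cen) && edge g x w) (nodes g).

Definition is_kstar (k : nat) (g : net) : Prop :=
  (k + k <= nn g)%N /\
  exists cen : seq nat,
    [/\ uniq cen, size cen = k & all (fun x => (x < nn g)%N) cen] /\
    [/\ (forall x y, x \in cen -> y \in cen -> x != y -> edge g x y),
     (forall w, (w < nn g)%N -> w \notin cen ->
        deg g w = 1%N /\ exists x, x \in cen /\ edge g w x) &
     forall x y, x \in cen -> y \in cen ->
       (1 <= leaf_count g cen x)%N /\ (leaf_count g cen x <= (leaf_count g cen y).+1)%N].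

From HB Require Import structures.
From mathcomp Require Import all_boot all_order all_algebra.
From mathcomp Require Import zify ring lra.
From Stdlib Require Import Relations.
Set Implicit Arguments. Unset Strict Implicit. Unset Printing Implicit Defensive.
Import Order.TTheory GRing.Theory Num.Theory.
Local Open Scope ring_scope.

(* The invariant is a "balanced canonical k-star": nodes [0 .. k-1] are
   pairwise linked centers, every other node [w] is a leaf hanging from the
   center [p w], every center has a leaf and leaf counts differ by at most 1.
   - Utilities.  Without intermediation a node's utility only depends on its
     degree and its distances to the others.  We read the distances off an
     explicit breadth-first labelling, so every utility needed below is a
     closed formula in [b 2], [b 3], [b 4] and the leaf counts.
   - Stability.  Comparing these formulas, no link of a balanced canonical
     k-star is worth cutting and no missing link is worth creating, so such
     networks are pairwise stable: the only possible step is an entry.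
   - Entry.  The newcomer's entry value is largest exactly at the centers
     with fewest leaves, which accept; entering there keeps the invariant.
   The theorem follows by induction along the process: every reachable
   network satisfies the invariant, hence is a k-star, and repeated entries
   reach any larger size. *)

(* [dl] is a breadth-first labelling of the relation [e] from the root [s]:
   [dl w = Some d] says that [w] is at distance [d] from [s] and [None] that
   it is unreachable; [pi] picks a predecessor on a shortest walk. *)
Definition bfs_labelling (e : rel nat) (s : nat) (dl : nat -> option nat)
    (pi : nat -> nat) : Prop :=
  [/\ dl s = Some 0%N, (forall w, dl w = Some 0%N -> w = s),
      (forall w m, dl w = Some m.+1 -> dl (pi w) = Some m /\ e (pi w) w) &
      (forall u w m, e u w -> dl u = Some m ->
         exists m', dl w = Some m' /\ (m' <= m.+1)%N)].

Lemma walkin_bfs (e : rel nat) (N s : nat) dl pi m w :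
  (s < N)%N -> (forall u w, e u w -> (u < N)%N) -> bfs_labelling e s dl pi ->
  walkin e (iota 0 N) m s w = if dl w is Some d then (d <= m)%N else false.
Proof.
move=> s_lt e_dom [dl_root dl_root_uniq dl_parent dl_edge].
elim: m w => [|m IH] w /=.
  case: eqP => [<-|w_neq]; first by rewrite dl_root mem_iota /=; lia.
  by case E: (dl w) => [[|d]|] //; case: w_neq; rewrite (dl_root_uniq _ E).
apply/idP/idP.
  case/orP; first by rewrite IH; case: (dl w) => // d; lia.
  case/hasP => z _ /andP[]; rewrite IH; case Ez: (dl z) => [d|] // Hd ezw.
  have [m' [-> Hm']] := dl_edge _ _ _ ezw Ez; lia.
case Ew: (dl w) => [d|] // Hd.
case: (leqP d m) => Hdm; first by rewrite IH Ew Hdm.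
have Ed : d = m.+1 by lia.
move: Ew; rewrite Ed => /dl_parent [Ep ep]; apply/orP; right; apply/hasP; exists (pi w).
  by rewrite mem_iota; have := e_dom _ _ ep; lia.
by rewrite IH Ep leqnn ep.
Qed.

Lemma find_iota_leq d a n :
  (a <= d < a + n)%N -> find (fun m => d <= m)%N (iota a n) = (d - a)%N.
Proof.
elim: n a => [|n IH] a /=; first lia.
by move=> Hd; case: (leqP d a) => Hda /=; [lia | rewrite IH; lia].
Qed.

Section UtilityFromLabelling.
Variables (R : realFieldType) (b : nat -> R).

(* the benefit a node draws from a node with BFS label [o], links excluded *)
Definition far_benefit (o : option nat) : R :=
  if o is Some d then (if (1 < d)%N then b d else 0) else 0.

Lemma util_bfs (c : R) (g : net) s dl pi :
  (s < nn g)%N -> bfs_labelling (edge g) s dl pi ->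
  (forall w d, dl w = Some d -> (d < nn g)%N) ->
  util b c 0 g s = (deg g s)%:R * (b 1%N - c) + \sum_(w <- nodes g) far_benefit (dl w).
Proof.
move=> s_lt bfs dl_lt.
have e_dom : forall u w, edge g u w -> (u < nn g)%N by move=> u w /and4P[].
have walkE := walkin_bfs _ _ s_lt e_dom bfs.
rewrite /util [X in _ - X]big1 ?subr0; last by move=> i _; rewrite mul0r.
rewrite [X in _ + X]big1_seq ?addr0; last first.
  by move=> i _; rewrite big1 // => j _; rewrite !mul0r.
congr (_ + _); rewrite big_mkcond; apply: eq_big_seq => w _ /=.
rewrite /conn /dist walkE.
rewrite (eq_find (a2 := fun m => if dl w is Some d then (d <= m)%N else false));
  last by move=> m; rewrite walkE.
rewrite /far_benefit; case Ew: (dl w) => [d|] //.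
have Hd := dl_lt _ _ Ew.
by rewrite (leq_trans (ltnW Hd) (leqnn _)) find_iota_leq ?subn0 //; lia.
Qed.

Definition label_count (g : net) (dl : nat -> option nat) (d : nat) : nat :=
  count (fun w => dl w == Some d) (nodes g).

Lemma util_bfs4 (g : net) s dl pi :
  (s < nn g)%N -> bfs_labelling (edge g) s dl pi ->
  (forall w d, dl w = Some d -> (d <= 4)%N) -> (5 <= nn g)%N ->
  util b (b 1%N - b 3%N) 0 g s = (deg g s)%:R * b 3%N
  + (label_count g dl 2)%:R * b 2%N + (label_count g dl 3)%:R * b 3%N
  + (label_count g dl 4)%:R * b 4%N.
Proof.
move=> s_lt bfs dl_le4 g5.
rewrite (util_bfs _ s_lt bfs); last by move=> w d /dl_le4; lia.
have -> : b 1%N - (b 1%N - b 3%N) = b 3%N by ring.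
rewrite -!addrA; congr (_ + _); rewrite /label_count !addrA.
elim: (nodes g) => [|w s' IH]; first by rewrite big_nil !mul0r !addr0.
rewrite big_cons IH /= !natrD !mulrDl.
case E: (dl w) => [d|] /=; last by rewrite /far_benefit !mul0r !add0r.
have := dl_le4 _ _ E.
by case: d E => [|[|[|[|[|d]]]]] E //= _; rewrite /far_benefit /= ?mul1r ?mul0r ?add0r ?addr0; lra.
Qed.
End UtilityFromLabelling.

(* Counting is done by pointwise linear identities between indicators:
   if [a + b = c + d] pointwise then [#a = #c + #d - #b]. *)
Lemma count_linE (a b c d : pred nat) s :
  (forall w, w \in s -> a w + b w = c w + d w)%N ->
  count a s = (count c s + count d s - count b s)%N.
Proof.
suff: (forall w, w \in s -> a w + b w = c w + d w)%N ->
  (count a s + count b s = count c s + count d s)%N by move=> H /H; lia.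
elim: s => //= x s IH H.
have := H x (mem_head _ _); have := IH (fun w Hw => H w (mem_behead (s:=x::s) Hw)).
lia.
Qed.

Lemma count_lt k N : (k <= N)%N -> count (fun w => w < k)%N (iota 0 N) = k.
Proof.
elim: N => [|N IH] H; first by have -> : k = 0%N by lia.
rewrite -addn1 iotaD count_cat /= add0n.
case: (leqP k N) => HkN; first by rewrite IH //; lia.
have -> : k = N.+1 by lia.
rewrite (@eq_in_count _ _ predT); last by move=> x; rewrite mem_iota /=; lia.
by rewrite count_predT size_iota; lia.
Qed.

Lemma count_ge k N : count (fun w => k <= w)%N (iota 0 N) = (N - k)%N.
Proof.
case: (leqP k N) => H.
  have := count_predC (fun w => w < k)%N (iota 0 N).
  rewrite count_lt // size_iota.
  rewrite (@eq_count _ (predC _) (fun w => k <= w)%N); last by move=> x /=; lia.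
  lia.
rewrite (@eq_in_count _ _ pred0); last by move=> x; rewrite mem_iota /=; lia.
by rewrite count_pred0; lia.
Qed.

Lemma count1 a N : (a < N)%N -> count (fun w => w == a) (iota 0 N) = 1%N.
Proof.
move=> H; have := count_uniq_mem a (iota_uniq 0 N).
by rewrite mem_iota H /= => <-; apply: eq_count => x /=.
Qed.

Lemma count2 a a' N : (a < N)%N -> (a' < N)%N -> a != a' ->
  count (fun w => (w == a) || (w == a')) (iota 0 N) = 2%N.
Proof.
move=> H H' Hne.
rewrite (@count_linE _ pred0 (fun w => w == a) (fun w => w == a')) ?count1 ?count_pred0 //.
move=> w _ /=; lia.
Qed.

Lemma count3 a a' a'' N : (a < N)%N -> (a' < N)%N -> (a'' < N)%N ->
  a != a' -> a != a'' -> a' != a'' ->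
  count (fun w => [|| w == a, w == a' | w == a'']) (iota 0 N) = 3%N.
Proof.
move=> H H' H'' ? ? ?.
rewrite (@count_linE _ pred0 (fun w => w == a) (fun w => (w == a') || (w == a'')))
  ?count1 ?count2 ?count_pred0 //.
move=> w _ /=; lia.
Qed.

Lemma count_last (P : pred nat) N :
  count (fun w => (w < N)%N && P w) (iota 0 N.+1) = count P (iota 0 N).
Proof.
rewrite -addn1 iotaD count_cat /= add0n ltnn /= !addn0.
by apply: eq_in_count => w; rewrite mem_iota => /andP[_ ->].
Qed.

Lemma same_pairC i j x y : same_pair i j x y = same_pair j i x y.
Proof. rewrite /same_pair; lia. Qed.

Lemma same_pairS i j x y : same_pair i j x y = same_pair i j y x.
Proof. rewrite /same_pair; lia. Qed.

Lemma edge_del g i j x y : edge (del_link g i j) x y = edge g x y && ~~ same_pair i j x y.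
Proof.
rewrite /edge /del_link /= (same_pairS i j y x).
by case: (adj g x y); case: (adj g y x); case: (same_pair i j x y); rewrite /= ?andbF ?andbT.
Qed.

Lemma edge_add g i j x y : (i < nn g)%N -> (j < nn g)%N -> i != j ->
  edge (add_link g i j) x y = edge g x y || same_pair i j x y.
Proof.
move=> Hi Hj Hij; rewrite /edge /add_link /= (same_pairS i j y x) /same_pair.
case: (adj g x y); case: (adj g y x); rewrite /= ?orbT ?orbF ?andbT; lia.
Qed.

Lemma edge_enter g T x y : (T < nn g)%N ->
  edge (enter g T) x y = edge g x y || same_pair (nn g) T x y.
Proof.
move=> HT; rewrite /edge /enter /add_link /= (same_pairS (nn g) T y x) /same_pair.
case: (adj g x y); case: (adj g y x); rewrite /= ?orbT ?orbF ?andbT ?andbF; lia.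
Qed.

Definition kstar_edge (k N : nat) (p : nat -> nat) (x y : nat) : bool :=
  [&& (x < N)%N, (y < N)%N & [|| [&& (x < k)%N, (y < k)%N & x != y],
     (k <= y)%N && (x == p y) | (k <= x)%N && (y == p x)]].

Definition leaves (k N : nat) (p : nat -> nat) (c : nat) : nat :=
  count (fun w => (k <= w)%N && (p w == c)) (iota 0 N).

Ltac subst_eqs :=
  repeat match goal with H : is_true (?x == ?y) |- _ =>
    move/eqP: H => H; try subst x; try subst y end.
Ltac solve_label := intros; subst_eqs; repeat match goal with
  | H : None = Some _ |- _ => discriminate H
  | H : Some _ = Some _ |- _ => case: H => H
  end; try reflexivity; try (congr Some; lia); try (split; [congr Some; lia| lia]);
  try (eexists; split; [reflexivity | lia]); try (exfalso; lia); try lia.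

(* Rewrite the utility of [s] with the labelling [d] and parent map [pi],
   discharging the root, uniqueness and range conditions; the parent and
   edge conditions are left to the caller. *)
Ltac use_bfs g s d pi Hg :=
  rewrite (@util_bfs4 _ _ g s d pi); rewrite ?Hg; try lia;
  [ | split; [ by rewrite /d; do ! case: ifP; solve_label
             | by move=> w; rewrite /d; do ! case: ifP; solve_label | | ]
    | by move=> w dd; rewrite /d; do ! case: ifP; solve_label].

Ltac label_cases d :=
  move=> w; rewrite mem_iota /d => Hw; do ! case: ifP; move=> /= *; subst_eqs; lia.

Section KStarUtilities.
Variables (R : realFieldType) (b : nat -> R).
Variables (k N : nat) (p : nat -> nat).
Hypothesis k_ge3 : (3 <= k)%N.
Hypothesis N_ge2k : (k + k <= N)%N.
Hypothesis p_lt : forall w, (p w < k)%N.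

Local Notation L := (leaves k N p).
Local Notation U g s := (util b (b 1%N - b 3%N) 0 g s).

Lemma deg_center g c : nn g = N -> (forall x y, edge g x y = kstar_edge k N p x y) ->
  (c < k)%N -> deg g c = (k - 1 + L c)%N.
Proof.
move=> Hg HE Hc; rewrite /deg /nodes Hg.
rewrite (@count_linE _ (fun w => w == c) (fun w => w < k)%N
  (fun w => (k <= w)%N && (p w == c))); last first.
  by move=> w; rewrite mem_iota HE /kstar_edge => Hw; have := p_lt w; lia.
rewrite count_lt ?count1 /L /leaves; lia.
Qed.

Lemma deg_leaf g l : nn g = N -> (forall x y, edge g x y = kstar_edge k N p x y) ->
  (k <= l < N)%N -> deg g l = 1%N.
Proof.
move=> Hg HE Hl; rewrite /deg /nodes Hg.
rewrite (@count_linE _ pred0 (fun w => w == p l) pred0); last first.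
  by move=> w; rewrite mem_iota HE /kstar_edge => Hw; have := p_lt w; have := p_lt l; lia.
rewrite count1 ?count_pred0 //; have := p_lt l; lia.
Qed.

Section AtCenter.
Variable g : net.
Hypothesis Hg : nn g = N.
Hypothesis HE : forall x y, edge g x y = kstar_edge k N p x y.
Variable c : nat.
Hypothesis Hc : (c < k)%N.

Definition center_label w := if (N <= w)%N then None else if w == c then Some 0%N
  else if (w < k)%N then Some 1%N else if p w == c then Some 1%N else Some 2%N.
Definition center_parent w := if (w < k)%N then c else if p w == c then c else p w.

Lemma util_center : U g c = (k - 1 + L c)%:R * b 3%N + (N - k - L c)%:R * b 2%N.
Proof.
use_bfs g c center_label center_parent Hg.
- have E2 : label_count g center_label 2 = (N - k - L c)%N.
    rewrite /label_count /nodes Hg.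
    rewrite (@count_linE _ (fun w => (k <= w)%N && (p w == c)) (fun w => k <= w)%N pred0);
      last by label_cases center_label.
    rewrite count_ge count_pred0 /L /leaves; lia.
  have E34 d : label_count g center_label d.+3 = 0%N.
    rewrite /label_count (@eq_in_count _ _ pred0) ?count_pred0 // /nodes Hg.
    by move=> w; rewrite mem_iota /center_label => Hw; do ! case: ifP.
  rewrite (deg_center Hg HE Hc) E2 !E34 !mul0r !addr0; ring.
- move=> w m; rewrite HE /kstar_edge /center_label /center_parent.
  by have := p_lt w; have := p_lt c; do ! case: ifP; solve_label.
- move=> u w m; rewrite HE /kstar_edge /center_label.
  by have := p_lt u; have := p_lt w; have := p_lt c; do ! case: ifP; solve_label.
Qed.
End AtCenter.

Section AtLeaf.
Variable g : net.
Hypothesis Hg : nn g = N.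
Hypothesis HE : forall x y, edge g x y = kstar_edge k N p x y.
Variable l : nat.
Hypothesis Hl : (k <= l < N)%N.

Definition leaf_label w := if (N <= w)%N then None else if w == l then Some 0%N
  else if w == p l then Some 1%N else if (w < k)%N then Some 2%N
  else if p w == p l then Some 2%N else Some 3%N.
Definition leaf_parent w :=
  if w == p l then l else if (w < k)%N then p l else if p w == p l then p l else p w.

Lemma util_leaf :
  U g l = b 3%N + (k + L (p l) - 2)%:R * b 2%N + (N - k - L (p l))%:R * b 3%N.
Proof.
have Hpl := p_lt l.
use_bfs g l leaf_label leaf_parent Hg.
- have E2 : label_count g leaf_label 2 = (k + L (p l) - 2)%N.
    rewrite /label_count /nodes Hg.
    rewrite (@count_linE _ (fun w => (w == p l) || (w == l)) (fun w => w < k)%N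
      (fun w => (k <= w)%N && (p w == p l)));
      last by label_cases leaf_label.
    rewrite count_lt ?count2 /L /leaves; lia.
  have E3 : label_count g leaf_label 3 = (N - k - L (p l))%N.
    rewrite /label_count /nodes Hg.
    rewrite (@count_linE _ (fun w => (k <= w)%N && (p w == p l)) (fun w => k <= w)%N pred0);
      last by label_cases leaf_label.
    rewrite count_ge count_pred0 /L /leaves; lia.
  have E4 : label_count g leaf_label 4 = 0%N.
    rewrite /label_count (@eq_in_count _ _ pred0) ?count_pred0 // /nodes Hg.
    by move=> w; rewrite mem_iota /leaf_label => Hw; do ! case: ifP.
  by rewrite (deg_leaf Hg HE Hl) E2 E3 E4 !mul0r !addr0 mul1r.
- move=> w m; rewrite HE /kstar_edge /leaf_label /leaf_parent.
  by have := p_lt w; do ! case: ifP; solve_label.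
- move=> u w m; rewrite HE /kstar_edge /leaf_label.
  by have := p_lt u; have := p_lt w; do ! case: ifP; solve_label.
Qed.
End AtLeaf.
End KStarUtilities.

Section KStarDeviations.
Variables (R : realFieldType) (b : nat -> R).
Variables (k N : nat) (p : nat -> nat).
Hypothesis k_ge3 : (3 <= k)%N.
Hypothesis N_ge2k : (k + k <= N)%N.
Hypothesis p_lt : forall w, (p w < k)%N.

Local Notation L := (leaves k N p).
Local Notation U g s := (util b (b 1%N - b 3%N) 0 g s).

Lemma leaves_pair c1 c2 : c1 != c2 ->
  count (fun w => (k <= w)%N && ((p w == c1) || (p w == c2))) (iota 0 N) = (L c1 + L c2)%N.
Proof.
move=> c12; rewrite (@count_linE _ pred0 (fun w => (k <= w)%N && (p w == c1))
  (fun w => (k <= w)%N && (p w == c2))) ?count_pred0 /L /leaves; first lia.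
move=> w _ /=; lia.
Qed.

Lemma leaves_pair_le c1 c2 : c1 != c2 -> (L c1 + L c2 <= N - k)%N.
Proof.
move=> c12; rewrite -leaves_pair // -count_ge; apply: sub_count => w /=; lia.
Qed.

Section CenterLeafCut.
Variable g : net.
Hypothesis Hg : nn g = N.
Variables c l : nat.
Hypothesis HE : forall x y, edge g x y = kstar_edge k N p x y && ~~ same_pair c l x y.
Hypothesis Hc : (c < k)%N.
Hypothesis Hl : (k <= l < N)%N.
Hypothesis Hpl : p l = c.

Definition cut_center_label w := if (N <= w)%N then None else if w == c then Some 0%N
  else if w == l then None
  else if (w < k)%N then Some 1%N else if p w == c then Some 1%N else Some 2%N.

Lemma util_center_cut_leaf :
  U g c = (k - 2 + L c)%:R * b 3%N + (N - k - L c)%:R * b 2%N.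
Proof.
use_bfs g c cut_center_label (center_parent k p c) Hg.
- have E1 : deg g c = (k - 2 + L c)%N.
    rewrite /deg /nodes Hg.
    rewrite (@count_linE _ (fun w => (w == c) || (w == l)) (fun w => w < k)%N
      (fun w => (k <= w)%N && (p w == c))); last first.
      move=> w; rewrite mem_iota HE /kstar_edge /same_pair => Hw.
      by have := p_lt w; case: (eqVneq w l) => [->|]; lia.
    rewrite count_lt ?count2 /L /leaves; lia.
  have E2 : label_count g cut_center_label 2 = (N - k - L c)%N.
    rewrite /label_count /nodes Hg.
    rewrite (@count_linE _ (fun w => (k <= w)%N && (p w == c)) (fun w => k <= w)%N pred0);
      last by label_cases cut_center_label.
    rewrite count_ge count_pred0 /L /leaves; lia.
  have E34 d : label_count g cut_center_label d.+3 = 0%N.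
    rewrite /label_count (@eq_in_count _ _ pred0) ?count_pred0 // /nodes Hg.
    by move=> w; rewrite mem_iota /cut_center_label => Hw; do ! case: ifP.
  by rewrite E1 E2 !E34 !mul0r !addr0.
- move=> w m; rewrite HE /kstar_edge /same_pair /cut_center_label /center_parent.
  by have := p_lt w; have := p_lt l; do ! case: ifP; solve_label.
- move=> u w m; rewrite HE /kstar_edge /same_pair /cut_center_label.
  by have := p_lt u; have := p_lt w; do ! case: ifP; solve_label.
Qed.

(* the leaf [l] is then isolated *)
Lemma util_leaf_cut : U g l = 0.
Proof.
use_bfs g l (fun w => if w == l then Some 0%N else None) (fun w : nat => w) Hg.
- have E1 : deg g l = 0%N.
    rewrite /deg (@eq_in_count _ _ pred0) ?count_pred0 // /nodes Hg.
    move=> w; rewrite mem_iota HE /kstar_edge /same_pair /= => Hw.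
    by have := p_lt w; have := p_lt l; lia.
  have E d : label_count g (fun w => if w == l then Some 0%N else None) d.+2 = 0%N.
    rewrite /label_count (@eq_in_count _ _ pred0) ?count_pred0 // /nodes Hg.
    by move=> w; case: ifP.
  by rewrite E1 !E !mul0r !addr0.
- by move=> w m; case: ifP.
- move=> u w m; rewrite HE /kstar_edge /same_pair.
  by have := p_lt u; have := p_lt w; do ! case: ifP; solve_label.
Qed.
End CenterLeafCut.

(* The center [c1] after cutting its link to the center [c2]: [c2] is then
   reached in two steps through a third center [c3]. *)
Section CenterCenterCut.
Variable g : net.
Hypothesis Hg : nn g = N.
Variables c1 c2 : nat.
Hypothesis HE : forall x y, edge g x y = kstar_edge k N p x y && ~~ same_pair c1 c2 x y.
Hypothesis Hc1 : (c1 < k)%N.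
Hypothesis Hc2 : (c2 < k)%N.
Hypothesis Hc12 : c1 != c2.

Definition third_center :=
  if (c1 != 0%N) && (c2 != 0%N) then 0%N
  else if (c1 != 1%N) && (c2 != 1%N) then 1%N else 2%N.

Definition cut_label w := if (N <= w)%N then None else if w == c1 then Some 0%N
  else if w == c2 then Some 2%N
  else if (w < k)%N then Some 1%N else if p w == c1 then Some 1%N
  else if p w == c2 then Some 3%N else Some 2%N.
Definition cut_parent w := if w == c2 then third_center else if (w < k)%N then c1
  else if p w == c1 then c1 else if p w == c2 then c2 else p w.

Lemma util_center_cut_center : U g c1 = (k - 2 + L c1)%:R * b 3%N
  + (N - k - L c1 - L c2 + 1)%:R * b 2%N + (L c2)%:R * b 3%N.
Proof.
have [c3_lt c31 c32] : [/\ (third_center < k)%N, third_center != c1 & third_center != c2].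
  by rewrite /third_center; do ! case: ifP; move=> *; split; lia.
have HL := leaves_pair_le Hc12.
use_bfs g c1 cut_label cut_parent Hg.
- have E1 : deg g c1 = (k - 2 + L c1)%N.
    rewrite /deg /nodes Hg.
    rewrite (@count_linE _ (fun w => (w == c1) || (w == c2)) (fun w => w < k)%N
      (fun w => (k <= w)%N && (p w == c1)));
      last by move=> w; rewrite mem_iota HE /kstar_edge /same_pair => Hw; have := p_lt w; lia.
    rewrite count_lt ?count2 /L /leaves; lia.
  have E2 : label_count g cut_label 2 = (N - k - L c1 - L c2 + 1)%N.
    rewrite /label_count /nodes Hg.
    rewrite (@count_linE _ (fun w => (k <= w)%N && ((p w == c1) || (p w == c2)))
      (fun w => k <= w)%N (fun w => w == c2));
      last by label_cases cut_label.
    rewrite count_ge count1 ?leaves_pair //; lia.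
  have E3 : label_count g cut_label 3 = L c2.
    rewrite /label_count /nodes Hg.
    rewrite (@count_linE _ pred0 (fun w => (k <= w)%N && (p w == c2)) pred0)
      ?count_pred0 /L /leaves; first lia.
    by label_cases cut_label.
  have E4 : label_count g cut_label 4 = 0%N.
    rewrite /label_count (@eq_in_count _ _ pred0) ?count_pred0 // /nodes Hg.
    by move=> w; rewrite mem_iota /cut_label => Hw; do ! case: ifP.
  by rewrite E1 E2 E3 E4 !mul0r !addr0.
- move=> w m; rewrite HE /kstar_edge /same_pair /cut_label /cut_parent.
  by have := p_lt w; do ! case: ifP; solve_label.
- move=> u w m; rewrite HE /kstar_edge /same_pair /cut_label.
  by have := p_lt u; have := p_lt w; do ! case: ifP; solve_label.
Qed.
End CenterCenterCut.

Section CenterForeignLeaf.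
Variable g : net.
Hypothesis Hg : nn g = N.
Variables l j : nat.
Hypothesis HE : forall x y, edge g x y = kstar_edge k N p x y || same_pair l j x y.
Hypothesis Hj : (j < k)%N.
Hypothesis Hl : (k <= l < N)%N.
Hypothesis Hpl : p l != j.

Definition extra_label w := if (N <= w)%N then None else if w == j then Some 0%N
  else if (w < k)%N then Some 1%N else if w == l then Some 1%N
  else if p w == j then Some 1%N else Some 2%N.
Definition extra_parent w :=
  if (w < k)%N then j else if w == l then j else if p w == j then j else p w.

Lemma util_center_add_leaf :
  U g j = (k + L j)%:R * b 3%N + (N - k - L j - 1)%:R * b 2%N.
Proof.
use_bfs g j extra_label extra_parent Hg.
- have E0 : count (fun w => (k <= w)%N && ((p w == j) || (w == l))) (iota 0 N) = (L j + 1)%N.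
    rewrite (@count_linE _ pred0 (fun w => (k <= w)%N && (p w == j)) (fun w => w == l))
      ?count_pred0 ?count1 /L /leaves; try lia.
    by move=> w _ /=; have := p_lt w; case: (eqVneq w l) => [->|]; lia.
  have HL : (L j + 1 <= N - k)%N.
    by rewrite -E0 -count_ge; apply: sub_count => w /=; lia.
  have E1 : deg g j = (k + L j)%N.
    rewrite /deg /nodes Hg.
    rewrite (@count_linE _ (fun w => w == j) (fun w => w < k)%N
      (fun w => (k <= w)%N && ((p w == j) || (w == l)))); last first.
      move=> w; rewrite mem_iota HE /kstar_edge /same_pair => Hw.
      by have := p_lt w; case: (eqVneq w l) => [->|]; lia.
    rewrite count_lt ?count1 ?E0; lia.
  have E2 : label_count g extra_label 2 = (N - k - L j - 1)%N.
    rewrite /label_count /nodes Hg.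
    rewrite (@count_linE _ (fun w => (k <= w)%N && ((p w == j) || (w == l)))
      (fun w => k <= w)%N pred0);
      last by label_cases extra_label.
    rewrite count_ge count_pred0 E0; lia.
  have E34 d : label_count g extra_label d.+3 = 0%N.
    rewrite /label_count (@eq_in_count _ _ pred0) ?count_pred0 // /nodes Hg.
    by move=> w; rewrite mem_iota /extra_label => Hw; do ! case: ifP.
  by rewrite E1 E2 !E34 !mul0r !addr0.
- move=> w m; rewrite HE /kstar_edge /same_pair /extra_label /extra_parent.
  by have := p_lt w; have := p_lt l; do ! case: ifP; solve_label.
- move=> u w m; rewrite HE /kstar_edge /same_pair /extra_label.
  by have := p_lt u; have := p_lt w; have := p_lt l; do ! case: ifP; solve_label.
Qed.
End CenterForeignLeaf.

Section LeafLeaf.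
Variable g : net.
Hypothesis Hg : nn g = N.
Variables l1 l2 : nat.
Hypothesis HE : forall x y, edge g x y = kstar_edge k N p x y || same_pair l1 l2 x y.
Hypothesis Hl1 : (k <= l1 < N)%N.
Hypothesis Hl2 : (k <= l2 < N)%N.
Hypothesis Hl12 : l1 != l2.

Definition ll_label w := if (N <= w)%N then None else if w == l1 then Some 0%N
  else if w == p l1 then Some 1%N else if w == l2 then Some 1%N else if (w < k)%N then Some 2%N
  else if p w == p l1 then Some 2%N else Some 3%N.
Definition ll_parent w := if w == p l1 then l1 else if w == l2 then l1
  else if (w < k)%N then p l1 else if p w == p l1 then p l1 else p w.

Lemma ll_label_counts :
  (label_count g ll_label 2)%:R * b 2%N + (label_count g ll_label 3)%:R * b 3%N =
  if p l2 == p l1 then (k + L (p l1) - 3)%:R * b 2%N + (N - k - L (p l1))%:R * b 3%N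
  else (k + L (p l1) - 2)%:R * b 2%N + (N - k - L (p l1) - 1)%:R * b 3%N.
Proof.
have pl1_lt := p_lt l1.
case: ifP => same_center.
- have E2 : label_count g ll_label 2 = (k + L (p l1) - 3)%N.
    rewrite /label_count /nodes Hg.
    rewrite (@count_linE _ (fun w => [|| w == p l1, w == l1 | w == l2]) (fun w => w < k)%N
      (fun w => (k <= w)%N && (p w == p l1))); last first.
      move=> w; rewrite mem_iota /ll_label => Hw.
      case: (eqVneq w l2) => [->|?]; [|case: (eqVneq w l1) => [->|?]];
        do ! case: ifP; move=> /= *; subst_eqs; lia.
    rewrite count_lt ?count3 /L /leaves; lia.
  have E3 : label_count g ll_label 3 = (N - k - L (p l1))%N.
    rewrite /label_count /nodes Hg.
    rewrite (@count_linE _ (fun w => (k <= w)%N && (p w == p l1)) (fun w => k <= w)%N pred0);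
      last first.
      move=> w; rewrite mem_iota /ll_label => Hw.
      case: (eqVneq w l2) => [->|?]; [|case: (eqVneq w l1) => [->|?]];
        do ! case: ifP; move=> /= *; subst_eqs; lia.
    rewrite count_ge count_pred0 /L /leaves; lia.
  by rewrite E2 E3.
- have E0 : count (fun w => (k <= w)%N && ((p w == p l1) || (w == l2))) (iota 0 N)
            = (L (p l1) + 1)%N.
    rewrite (@count_linE _ pred0 (fun w => (k <= w)%N && (p w == p l1)) (fun w => w == l2))
      ?count_pred0 ?count1 /L /leaves; try lia.
    by move=> w _ /=; case: (eqVneq w l2) => [->|]; lia.
  have E2 : label_count g ll_label 2 = (k + L (p l1) - 2)%N.
    rewrite /label_count /nodes Hg.
    rewrite (@count_linE _ (fun w => (w == p l1) || (w == l1)) (fun w => w < k)%N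
      (fun w => (k <= w)%N && (p w == p l1))); last first.
      move=> w; rewrite mem_iota /ll_label => Hw.
      case: (eqVneq w l2) => [->|?]; [|case: (eqVneq w l1) => [->|?]];
        do ! case: ifP; move=> /= *; subst_eqs; lia.
    rewrite count_lt ?count2 /L /leaves; lia.
  have E3 : label_count g ll_label 3 = (N - k - L (p l1) - 1)%N.
    rewrite /label_count /nodes Hg.
    rewrite (@count_linE _ (fun w => (k <= w)%N && ((p w == p l1) || (w == l2)))
      (fun w => k <= w)%N pred0); last first.
      move=> w; rewrite mem_iota /ll_label => Hw.
      case: (eqVneq w l2) => [->|?]; [|case: (eqVneq w l1) => [->|?]];
        do ! case: ifP; move=> /= *; subst_eqs; lia.
    rewrite count_ge count_pred0 E0; lia.
  by rewrite E2 E3.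
Qed.

Lemma util_leaf_add_leaf : U g l1 = 2%:R * b 3%N +
  (if p l2 == p l1 then (k + L (p l1) - 3)%:R * b 2%N + (N - k - L (p l1))%:R * b 3%N
   else (k + L (p l1) - 2)%:R * b 2%N + (N - k - L (p l1) - 1)%:R * b 3%N).
Proof.
have pl1_lt := p_lt l1.
use_bfs g l1 ll_label ll_parent Hg.
- have E1 : deg g l1 = 2%N.
    rewrite /deg /nodes Hg.
    rewrite (@count_linE _ pred0 (fun w => (w == p l1) || (w == l2)) pred0); last first.
      move=> w; rewrite mem_iota HE /kstar_edge /same_pair /= => Hw.
      by have := p_lt w; case: (eqVneq w l2) => [->|]; lia.
    rewrite ?count2 ?count_pred0; lia.
  have E4 : label_count g ll_label 4 = 0%N.
    rewrite /label_count (@eq_in_count _ _ pred0) ?count_pred0 // /nodes Hg.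
    by move=> w; rewrite mem_iota /ll_label => Hw; do ! case: ifP.
  by rewrite E1 E4 mul0r addr0 -!addrA ll_label_counts.
- move=> w m; rewrite HE /kstar_edge /same_pair /ll_label /ll_parent.
  by have := p_lt w; have := p_lt l2; do ! case: ifP; solve_label.
- move=> u w m; rewrite HE /kstar_edge /same_pair /ll_label.
  by have := p_lt u; have := p_lt w; have := p_lt l2; do ! case: ifP; solve_label.
Qed.
End LeafLeaf.

(* A newcomer [N] linked to the leaf [T] sees [T] at distance 1, its center
   at distance 2, the rest of the clique and the leaves of that center at
   distance 3 and all remaining leaves at distance 4. *)
Section NewcomerAtLeaf.
Variable g : net.
Hypothesis Hg : nn g = N.+1.
Variable T : nat.
Hypothesis HE : forall x y, edge g x y = kstar_edge k N p x y || same_pair N T x y.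
Hypothesis HT : (k <= T < N)%N.

Definition newcomer_label w := if (N < w)%N then None else if w == N then Some 0%N
  else if w == T then Some 1%N else if w == p T then Some 2%N else if (w < k)%N then Some 3%N
  else if p w == p T then Some 3%N else Some 4%N.
Definition newcomer_parent w := if w == T then N else if w == p T then T
  else if (w < k)%N then p T else if p w == p T then p T else p w.

Lemma util_newcomer_at_leaf : U g N =
  b 3%N + b 2%N + (k + L (p T) - 2)%:R * b 3%N + (N - k - L (p T))%:R * b 4%N.
Proof.
have pT_lt := p_lt T.
use_bfs g N newcomer_label newcomer_parent Hg.
- have E1 : deg g N = 1%N.
    rewrite /deg /nodes Hg.
    rewrite (@count_linE _ pred0 (fun w => w == T) pred0);
      last by move=> w; rewrite mem_iota HE /kstar_edge /same_pair /= => Hw; lia.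
    rewrite ?count1 ?count_pred0; lia.
  have E2 : label_count g newcomer_label 2 = 1%N.
    rewrite /label_count /nodes Hg.
    rewrite (@count_linE _ pred0 (fun w => w == p T) pred0);
      last by label_cases newcomer_label.
    rewrite ?count1 ?count_pred0; lia.
  have EL : count (fun w => (w < N)%N && ((k <= w)%N && (p w == p T))) (iota 0 N.+1) = L (p T).
    by rewrite count_last.
  have E3 : label_count g newcomer_label 3 = (k + L (p T) - 2)%N.
    rewrite /label_count /nodes Hg.
    rewrite (@count_linE _ (fun w => (w == p T) || (w == T)) (fun w => w < k)%N
      (fun w => (w < N)%N && ((k <= w)%N && (p w == p T)))); last first.
      move=> w; rewrite mem_iota /newcomer_label => Hw.
      by case: (eqVneq w T) => [->|?]; do ! case: ifP; move=> /= *; subst_eqs; lia.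
    rewrite count_lt ?count2 ?EL; lia.
  have E0 : count (fun w => ((w < N)%N && ((k <= w)%N && (p w == p T))) || (w == N))
              (iota 0 N.+1) = (L (p T) + 1)%N.
    rewrite (@count_linE _ pred0 (fun w => (w < N)%N && ((k <= w)%N && (p w == p T)))
      (fun w => w == N)) ?count_pred0 ?count1 ?EL; try lia.
    by move=> w _ /=; lia.
  have E4 : label_count g newcomer_label 4 = (N - k - L (p T))%N.
    rewrite /label_count /nodes Hg.
    rewrite (@count_linE _ (fun w => ((w < N)%N && ((k <= w)%N && (p w == p T))) || (w == N))
      (fun w => k <= w)%N pred0); last first.
      move=> w; rewrite mem_iota /newcomer_label => Hw.
      by case: (eqVneq w T) => [->|?]; do ! case: ifP; move=> /= *; subst_eqs; lia.
    have : (L (p T) + 1 <= N.+1 - k)%N.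
      by rewrite -E0 -count_ge; apply: sub_count => w /=; lia.
    rewrite count_ge count_pred0 E0; lia.
  rewrite E1 E2 E3 E4 mul1r; ring.
- move=> w m; rewrite HE /kstar_edge /same_pair /newcomer_label /newcomer_parent.
  by have := p_lt w; do ! case: ifP; solve_label.
- move=> u w m; rewrite HE /kstar_edge /same_pair /newcomer_label.
  by have := p_lt u; have := p_lt w; do ! case: ifP; solve_label.
Qed.
End NewcomerAtLeaf.

(* Entry at a center [T] keeps the canonical form: the newcomer [N] becomes
   a leaf of [T]. *)
Definition enter_map (T : nat) (w : nat) : nat := if w == N then T else p w.

Lemma enter_map_lt T : (T < k)%N -> forall w, (enter_map T w < k)%N.
Proof. by move=> HT w; rewrite /enter_map; case: ifP. Qed.

Lemma edge_enter_center g T : nn g = N ->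
  (forall x y, edge g x y = kstar_edge k N p x y) -> (T < k)%N ->
  forall x y, edge (enter g T) x y = kstar_edge k N.+1 (enter_map T) x y.
Proof.
move=> Hg HE HT x y; rewrite edge_enter Hg ?HE /kstar_edge /same_pair /enter_map; last lia.
by have := p_lt x; have := p_lt y; do ! case: ifP; move=> /= *; subst_eqs; lia.
Qed.

Lemma leaves_enter T c : (T < k)%N -> leaves k N.+1 (enter_map T) c = (L c + (T == c))%N.
Proof.
move=> HT; rewrite /leaves -addn1 iotaD count_cat /= add0n /enter_map eqxx.
congr (_ + _)%N.
  apply: eq_in_count => w; rewrite mem_iota => /andP[_ Hw].
  by have -> : (w == N) = false by lia.
have -> : (k <= N)%N by lia.
by rewrite addn0.
Qed.
End KStarDeviations.

Ltac push_natR := rewrite ?natrD ?mulrS /=; repeat (rewrite natrB; last by lia).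

Lemma sum_pair_le (h : nat -> nat) k a a' : (a < k)%N -> (a' < k)%N -> a != a' ->
  (h a + h a' <= \sum_(c < k) h c)%N.
Proof.
move=> Ha Ha' aa'.
rewrite (bigD1 (Ordinal Ha)) //= (bigD1 (Ordinal Ha')) /=; last by rewrite -val_eqE /= eq_sym.
by rewrite addnA leq_addr.
Qed.

Lemma other_center k c : (1 < k)%N -> exists2 c', (c' < k)%N & c != c'.
Proof. by move=> k_gt1; exists (if c == 0%N then 1%N else 0%N); case: ifP; lia. Qed.

Section LeafBalance.
Variables (k N : nat) (p : nat -> nat).
Hypothesis k_ge3 : (3 <= k)%N.
Hypothesis N_ge2k : (k + k <= N)%N.
Hypothesis p_lt : forall w, (p w < k)%N.
Hypothesis leaves_pos : forall c, (c < k)%N -> (1 <= leaves k N p c)%N.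

Local Notation L := (leaves k N p).

Lemma leaves_lt c : (c < k)%N -> (L c + 1 <= N - k)%N.
Proof.
move=> Hc; have [c' Hc' cc'] := other_center c (ltnW k_ge3).
by have := leaves_pair_le p k_ge3 N_ge2k cc'; have := leaves_pos Hc'; lia.
Qed.

Lemma leaves_total : (N - k)%N = \sum_(c < k) L c.
Proof.
rewrite -count_ge /leaves.
elim: (iota 0 N) => [|x s IH] /=; first by rewrite big1.
rewrite big_split /= -IH; congr (_ + _)%N.
rewrite (bigD1 (Ordinal (p_lt x))) //= eqxx andbT big1; first lia.
move=> c Hc; rewrite -val_eqE /= in Hc.
by rewrite eq_sym (negbTE Hc) andbF.
Qed.

(* two centers together hold all leaves but those of the other [k - 2] centers *)
Lemma leaves_two_bound a a' : (a < k)%N -> (a' < k)%N -> a != a' ->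
  (L a + L a' + k - 2 <= N - k)%N.
Proof.
move=> Ha Ha' aa'; rewrite leaves_total.
have -> : (\sum_(c < k) L c = k + \sum_(c < k) (L c - 1))%N.
  have -> : (\sum_(c < k) L c = \sum_(c < k) (1 + (L c - 1)))%N.
    by apply: eq_bigr => c _; have := leaves_pos (ltn_ord c); lia.
  by rewrite big_split /= sum1_card card_ord.
have := sum_pair_le (fun c => L c - 1)%N Ha Ha' aa'.
by have := leaves_pos Ha; have := leaves_pos Ha'; lia.
Qed.

End LeafBalance.

Section Stability.
Variables (R : realFieldType) (b : nat -> R).
Variables (k N : nat) (p : nat -> nat) (g : net).
Hypothesis k_ge3 : (3 <= k)%N.
Hypothesis N_ge2k : (k + k <= N)%N.
Hypothesis p_lt : forall w, (p w < k)%N.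
Hypothesis Hg : nn g = N.
Hypothesis HE : forall x y, edge g x y = kstar_edge k N p x y.
Hypothesis leaves_pos : forall c, (c < k)%N -> (1 <= leaves k N p c)%N.
Hypothesis b32 : b 3%N < b 2%N.
Hypothesis b43 : b 4%N < b 3%N.
Hypothesis b4_pos : 0 < b 4%N.

Local Notation L := (leaves k N p).
Local Notation U g s := (util b (b 1%N - b 3%N) 0 g s).

(* [lra]/[nra] only use hypotheses of the goal context, not section ones. *)
Local Ltac benefit_order := have := b32; have := b43; have := b4_pos; move=> *.

(* Cutting a link between two centers does not pay: the other center and
   its leaves move one step away, which costs at least the saved link. *)
Lemma cut_center_center g' i j : nn g' = N ->
  (forall x y, edge g' x y = kstar_edge k N p x y && ~~ same_pair i j x y) ->
  (i < k)%N -> (j < k)%N -> i != j -> U g' i <= U g i.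
Proof.
move=> Hg' HE' Hi Hj Hij.
rewrite (util_center_cut_center b k_ge3 N_ge2k p_lt Hg' HE' Hi Hj Hij).
rewrite (util_center b k_ge3 N_ge2k p_lt Hg HE Hi).
have := leaves_pair_le p k_ge3 N_ge2k Hij; have := leaves_pos Hi; move=> *.
have Rj : 1 <= (L j)%:R :> R by rewrite ler1n leaves_pos.
have loss : 0 <= ((L j)%:R - 1) * (b 2%N - b 3%N).
  by apply: mulr_ge0; rewrite subr_ge0 // ltW.
by push_natR; nra.
Qed.

Lemma cut_center_leaf g' c l : nn g' = N ->
  (forall x y, edge g' x y = kstar_edge k N p x y && ~~ same_pair c l x y) ->
  (c < k)%N -> (k <= l < N)%N -> p l = c -> U g' c <= U g c /\ U g' l <= U g l.
Proof.
move=> Hg' HE' Hc Hl Hpl.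
rewrite (util_center_cut_leaf b k_ge3 N_ge2k p_lt Hg' HE' Hc Hl Hpl).
rewrite (util_leaf_cut b k_ge3 N_ge2k p_lt Hg' HE' Hc Hl Hpl).
rewrite (util_center b k_ge3 N_ge2k p_lt Hg HE Hc) (util_leaf b k_ge3 N_ge2k p_lt Hg HE Hl).
have := leaves_pos Hc; have := leaves_lt k_ge3 N_ge2k leaves_pos Hc; move=> *.
benefit_order; split; first by push_natR; lra.
have b3_pos : 0 < b 3%N by lra.
have b2_pos : 0 < b 2%N by lra.
by rewrite !addr_ge0 ?mulr_ge0 ?ler0n ?ltW.
Qed.

(* A center linking to a foreign leaf loses [b 2 - b 3]: the leaf was
   already at distance 2 and the link costs [b 1 - b 3]. *)
Lemma link_center_leaf g' j l : nn g' = N ->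
  (forall x y, edge g' x y = kstar_edge k N p x y || same_pair l j x y) ->
  (j < k)%N -> (k <= l < N)%N -> p l != j -> U g' j < U g j.
Proof.
move=> Hg' HE' Hj Hl Hpl.
rewrite (util_center_add_leaf b k_ge3 N_ge2k p_lt Hg' HE' Hj Hl Hpl).
rewrite (util_center b k_ge3 N_ge2k p_lt Hg HE Hj).
have := leaves_pos Hj; have := leaves_lt k_ge3 N_ge2k leaves_pos Hj; move=> *.
by benefit_order; push_natR; lra.
Qed.

Lemma link_leaf_leaf g' l1 l2 : nn g' = N ->
  (forall x y, edge g' x y = kstar_edge k N p x y || same_pair l1 l2 x y) ->
  (k <= l1 < N)%N -> (k <= l2 < N)%N -> l1 != l2 -> U g' l1 <= U g l1.
Proof.
move=> Hg' HE' Hl1 Hl2 Hl12.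
rewrite (util_leaf_add_leaf b k_ge3 N_ge2k p_lt Hg' HE' Hl1 Hl2 Hl12).
rewrite (util_leaf b k_ge3 N_ge2k p_lt Hg HE Hl1).
have := leaves_pos (p_lt l1); have := leaves_lt k_ge3 N_ge2k leaves_pos (p_lt l1); move=> *.
by benefit_order; case: ifP => _; push_natR; lra.
Qed.

Lemma kstar_no_cut i j : edge g i j ->
  U (del_link g i j) i <= U g i /\ U (del_link g i j) j <= U g j.
Proof.
have HE' x y : edge (del_link g i j) x y = kstar_edge k N p x y && ~~ same_pair i j x y.
  by rewrite edge_del HE.
have HE'' x y : edge (del_link g i j) x y = kstar_edge k N p x y && ~~ same_pair j i x y.
  by rewrite HE' same_pairC.
have Hg' : nn (del_link g i j) = N by [].
rewrite HE /kstar_edge => /and3P[Hi Hj].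
case/or3P=> [/and3P[Hik Hjk Hij] | /andP[Hkj /eqP Hipj] | /andP[Hki /eqP Hjpi]].
- split; first exact: cut_center_center Hg' HE' Hik Hjk Hij.
  by apply: cut_center_center Hg' HE'' Hjk Hik _; rewrite eq_sym.
- have Hik : (i < k)%N by rewrite Hipj.
  by apply: cut_center_leaf Hg' HE' Hik _ (esym Hipj); lia.
- have Hjk : (j < k)%N by rewrite Hjpi.
  have Hik : (k <= i < N)%N by lia.
  by have [] := cut_center_leaf Hg' HE'' Hjk Hik (esym Hjpi).
Qed.

Lemma kstar_no_link i j : (i < N)%N -> (j < N)%N -> i != j -> ~~ edge g i j ->
  U g i < U (add_link g i j) i -> U (add_link g i j) j < U g j.
Proof.
move=> Hi Hj Hij; rewrite HE /kstar_edge Hi Hj /= => no_edge.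
have Hg' : nn (add_link g i j) = N by [].
have HE' x y : edge (add_link g i j) x y = kstar_edge k N p x y || same_pair i j x y.
  by rewrite edge_add ?Hg // HE.
have HE'' x y : edge (add_link g i j) x y = kstar_edge k N p x y || same_pair j i x y.
  by rewrite HE' same_pairC.
case: (ltnP i k) => Hik; case: (ltnP j k) => Hjk.
- by move: no_edge; rewrite Hik Hjk Hij.
- have Hpj : p j != i by move: no_edge; rewrite Hik /=; lia.
  have Hjl : (k <= j < N)%N by lia.
  by have := link_center_leaf Hg' HE'' Hik Hjl Hpj; lra.
- have Hpi : p i != j by move: no_edge; rewrite Hjk /=; lia.
  by move=> _; apply: link_center_leaf Hg' HE' Hjk _ Hpi; lia.
- have Hil : (k <= i < N)%N by lia.
  have Hjl : (k <= j < N)%N by lia.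
  by have := link_leaf_leaf Hg' HE' Hil Hjl Hij; lra.
Qed.

Theorem kstar_pairwise_stable : pairwise_stable b (b 1%N - b 3%N) 0 g.
Proof. by split; [exact: kstar_no_cut | move=> i j; rewrite Hg; exact: kstar_no_link]. Qed.
End Stability.

Section EntryValues.
Variables (R : realFieldType) (b : nat -> R) (c0 : R).
Variables (k N : nat) (p : nat -> nat) (g : net).
Hypothesis k_ge3 : (3 <= k)%N.
Hypothesis N_ge2k : (k + k <= N)%N.
Hypothesis p_lt : forall w, (p w < k)%N.
Hypothesis Hg : nn g = N.
Hypothesis HE : forall x y, edge g x y = kstar_edge k N p x y.

Local Notation L := (leaves k N p).
Local Notation EV T := (entry_value b (b 1%N - b 3%N) 0 c0 g T).

Lemma nn_enter_N T : nn (enter g T) = N.+1.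
Proof. by rewrite /= Hg. Qed.

(* Entering at a center: the newcomer becomes one more leaf of [T]. *)
Lemma entry_value_center T : (T < k)%N -> EV T =
  - c0 * (k - 1 + L T)%:R + (b 3%N + (k - 1 + L T)%:R * b 2%N + (N - k - L T)%:R * b 3%N).
Proof.
move=> HT; rewrite /entry_value Hg (deg_center k_ge3 N_ge2k p_lt Hg HE HT).
have N1 : (k + k <= N.+1)%N by lia.
have HE' := edge_enter_center k_ge3 N_ge2k p_lt Hg HE HT.
have HN : (k <= N < N.+1)%N by lia.
rewrite (util_leaf b k_ge3 N1 (enter_map_lt N p_lt HT) (nn_enter_N T) HE' HN).
rewrite (leaves_enter p k_ge3 N_ge2k) /enter_map ?eqxx //.
have -> : (k + (L T + 1) - 2 = k - 1 + L T)%N by lia.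
by have -> : (N.+1 - k - (L T + 1) = N - k - L T)%N by lia.
Qed.

Lemma entry_value_leaf T : (k <= T < N)%N -> EV T = - c0
  + (b 3%N + b 2%N + (k + L (p T) - 2)%:R * b 3%N + (N - k - L (p T))%:R * b 4%N).
Proof.
move=> HT; rewrite /entry_value Hg (deg_leaf k_ge3 N_ge2k p_lt Hg HE HT) mulr1.
have HE' x y : edge (enter g T) x y = kstar_edge k N p x y || same_pair N T x y.
  by rewrite edge_enter ?Hg ?HE //; lia.
by rewrite (util_newcomer_at_leaf b k_ge3 N_ge2k p_lt (nn_enter_N T) HE' HT).
Qed.

Lemma util_center_after_entry T : (T < k)%N ->
  util b (b 1%N - b 3%N) 0 (enter g T) T
  = (k - 1 + (L T + 1))%:R * b 3%N + (N.+1 - k - (L T + 1))%:R * b 2%N.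
Proof.
move=> HT; have N1 : (k + k <= N.+1)%N by lia.
have HE' := edge_enter_center k_ge3 N_ge2k p_lt Hg HE HT.
rewrite (util_center b k_ge3 N1 (enter_map_lt N p_lt HT) (nn_enter_N T) HE' HT).
by rewrite (leaves_enter p k_ge3 N_ge2k) // eqxx.
Qed.
End EntryValues.

Section EntryChoice.
Variables (R : realFieldType) (b : nat -> R) (c0 : R).
Variables (k N : nat) (p : nat -> nat) (g : net).
Hypothesis k_ge3 : (3 <= k)%N.
Hypothesis N_ge2k : (k + k <= N)%N.
Hypothesis p_lt : forall w, (p w < k)%N.
Hypothesis Hg : nn g = N.
Hypothesis HE : forall x y, edge g x y = kstar_edge k N p x y.
Hypothesis leaves_pos : forall c, (c < k)%N -> (1 <= leaves k N p c)%N.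
Hypothesis b32 : b 3%N < b 2%N.
Hypothesis b43 : b 4%N < b 3%N.
Hypothesis b4_pos : 0 < b 4%N.
Hypothesis c0_gt : b 2%N - b 3%N < c0.
Hypothesis c0_lt : c0 < b 2%N - b 4%N.

Local Notation L := (leaves k N p).
Local Notation EV T := (entry_value b (b 1%N - b 3%N) 0 c0 g T).
Local Notation EV_center := (entry_value_center b c0 k_ge3 N_ge2k p_lt Hg HE).
Local Notation EV_leaf := (entry_value_leaf b c0 k_ge3 N_ge2k p_lt Hg HE).
Local Notation L_lt := (leaves_lt k_ge3 N_ge2k leaves_pos).
Local Notation L_two := (leaves_two_bound k_ge3 N_ge2k p_lt leaves_pos).

Local Ltac benefit_order := have := b32; have := b43; have := b4_pos; move=> *.
Local Ltac entry_order := benefit_order; have := c0_gt; have := c0_lt; move=> *.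

(* A center gains [b 2 - b 3 > 0] from a new leaf, so it accepts. *)
Lemma accepts_center T : (T < k)%N -> accepts b (b 1%N - b 3%N) 0 g T.
Proof.
move=> HT; split; first by rewrite Hg; lia.
rewrite (util_center_after_entry b k_ge3 N_ge2k p_lt Hg HE HT).
rewrite (util_center b k_ge3 N_ge2k p_lt Hg HE HT).
have := leaves_pos HT; have := L_lt HT; move=> *.
by benefit_order; push_natR; lra.
Qed.

(* Entering at a center beats staying out: [c0 < b 2 - b 4 < b 2]. *)
Lemma entry_value_center_pos T : (T < k)%N -> 0 < EV T.
Proof.
move=> HT; rewrite (EV_center HT).
have := L_lt HT; move=> *.
have R1 : 1 <= (L T)%:R :> R by rewrite ler1n leaves_pos.
have R2 : 1 <= (N - k - L T)%:R :> R by rewrite ler1n; lia.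
have Rk : 3 <= k%:R :> R by rewrite (ler_nat R 3 k).
by move: R2; push_natR => R2; entry_order; nra.
Qed.

(* Among centers the entry value strictly decreases with the number of
   leaves, each extra leaf costing [c0 - (b 2 - b 3) > 0]. *)
Lemma entry_value_center_cmp T T' : (T < k)%N -> (T' < k)%N -> (L T < L T')%N ->
  EV T' < EV T.
Proof.
move=> HT HT' LTT'; rewrite (EV_center HT) (EV_center HT').
have := L_lt HT; have := L_lt HT'; move=> *.
have Rlt : (L T)%:R + 1 <= (L T')%:R :> R by rewrite natr1 ler_nat.
by entry_order; push_natR; nra.
Qed.

Lemma entry_value_leaf_lt cs T : (cs < k)%N -> (forall c, (c < k)%N -> (L cs <= L c)%N) ->
  (k <= T < N)%N -> EV T < EV cs.
Proof.
move=> Hcs Hmin HT; have pT_lt := p_lt T.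
have Hbd : (L (p T) + L cs + k - 2 <= N - k)%N.
  case: (eqVneq (p T) cs) => [E|Ne]; last by have := L_two pT_lt Hcs Ne.
  have [c' Hc' csc'] := other_center cs (ltnW k_ge3).
  by have := L_two Hcs Hc' csc'; have := Hmin c' Hc'; rewrite E; lia.
have Rbd : ((L (p T) + L cs + k - 2)%:R <= (N - k)%:R :> R) by rewrite ler_nat.
have R1 : 1 <= (L cs)%:R :> R by rewrite ler1n leaves_pos.
have R1' : 1 <= (L (p T))%:R :> R by rewrite ler1n leaves_pos.
have Rk : 3 <= k%:R :> R by rewrite (ler_nat R 3 k).
rewrite (EV_leaf HT) (EV_center Hcs).
have := L_lt Hcs; move: Rbd; push_natR => Rbd.
by entry_order; nra.
Qed.

Lemma entry_value_best cs : (cs < k)%N -> (forall c, (c < k)%N -> (L cs <= L c)%N) ->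
  forall T, (T < N)%N -> EV T <= EV cs /\ (EV cs <= EV T -> (T < k)%N /\ L T = L cs).
Proof.
move=> Hcs Hmin T HT; case: (ltnP T k) => HTk; last first.
  have HTl : (k <= T < N)%N by lia.
  have := entry_value_leaf_lt Hcs Hmin HTl.
  by split=> [|le]; [apply: ltW | exfalso; lra].
case: (ltngtP (L cs) (L T)) => [lt|gt|eq]; last first.
- by rewrite (EV_center HTk) (EV_center Hcs) eq.
- by have := Hmin T HTk; lia.
- have := entry_value_center_cmp Hcs HTk lt.
  by split=> [|le]; [apply: ltW | exfalso; lra].
Qed.
End EntryChoice.

Definition balanced (k N : nat) (p : nat -> nat) : Prop :=
  (forall c, (c < k)%N -> (1 <= leaves k N p c)%N) /\
  (forall c c', (c < k)%N -> (c' < k)%N -> (leaves k N p c <= leaves k N p c' + 1)%N).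

Definition balanced_kstar (k : nat) (g : net) : Prop :=
  exists p, [/\ (k + k <= nn g)%N, (forall w, (p w < k)%N),
    (forall x y, edge g x y = kstar_edge k (nn g) p x y) & balanced k (nn g) p].

Lemma fewest_leaves k N p : (0 < k)%N ->
  exists2 cs, (cs < k)%N & forall c, (c < k)%N -> (leaves k N p cs <= leaves k N p c)%N.
Proof.
move=> k_pos.
have [cs _ Hmin] := @arg_minnP _ (Ordinal k_pos) xpredT (fun c : 'I_k => leaves k N p c) isT.
by exists cs => // c Hc; exact: (Hmin (Ordinal Hc)).
Qed.

Lemma balanced_kstar_is_kstar k g : (3 <= k)%N -> balanced_kstar k g -> is_kstar k g.
Proof.
move=> k_ge3; case=> p [N_ge2k p_lt HE [leaves_pos leaves_bal]]; split => //.
exists (iota 0 k); split.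
  by split; [exact: iota_uniq | rewrite size_iota | apply/allP => x; rewrite mem_iota; lia].
have leaf_countE x : (x < k)%N -> leaf_count g (iota 0 k) x = leaves k (nn g) p x.
  move=> Hx; rewrite /leaf_count /leaves /nodes; apply: eq_in_count => w.
  by rewrite !mem_iota HE /kstar_edge => Hw; have := p_lt w; lia.
split.
- by move=> x y; rewrite !mem_iota HE /kstar_edge => Hx Hy Hxy; lia.
- move=> w Hw; rewrite mem_iota => Hw'.
  have Hl : (k <= w < nn g)%N by lia.
  split; first exact: (deg_leaf k_ge3 N_ge2k p_lt erefl HE Hl).
  by exists (p w); rewrite mem_iota HE /kstar_edge; have := p_lt w; split; lia.
- move=> x y; rewrite !mem_iota => Hx Hy; rewrite !leaf_countE; try lia.
  by have := leaves_pos x; have := leaves_bal x y; split; lia.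
Qed.

(* The base graph: center [c] has the single leaf [c + k]. *)
Lemma balanced_kstar_base k : (0 < k)%N -> balanced_kstar k (kstar_base k).
Proof.
move=> k_pos.
pose pb w := if (k <= w < k + k)%N then (w - k)%N else 0%N.
exists pb; split => //=.
- by move=> w; rewrite /pb; case: ifP; lia.
- by move=> x y; rewrite /edge /kstar_base /kstar_edge /pb /=; do ! case: ifP; move=> /= *; lia.
- have one_leaf c : (c < k)%N -> leaves k (k + k) pb c = 1%N.
    move=> Hc; rewrite /leaves (@eq_in_count _ _ (fun w => w == c + k)).
      by rewrite count1 //; lia.
    by move=> w; rewrite mem_iota /pb => Hw; case: ifP; lia.
  by split => [c Hc|c c' Hc Hc']; rewrite !one_leaf.
Qed.

Section Process.
Variables (R : realFieldType) (b : nat -> R) (c0 : R) (k : nat).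
Hypothesis k_ge3 : (3 <= k)%N.
Hypothesis b32 : b 3%N < b 2%N.
Hypothesis b43 : b 4%N < b 3%N.
Hypothesis b4_pos : 0 < b 4%N.
Hypothesis c0_gt : b 2%N - b 3%N < c0.
Hypothesis c0_lt : c0 < b 2%N - b 4%N.

Local Notation step := (step b (b 1%N - b 3%N) 0 c0).

Lemma balanced_kstar_stable g : balanced_kstar k g -> pairwise_stable b (b 1%N - b 3%N) 0 g.
Proof.
case=> p [N_ge2k p_lt HE [leaves_pos _]].
exact: (kstar_pairwise_stable k_ge3 N_ge2k p_lt erefl HE leaves_pos b32 b43 b4_pos).
Qed.

Lemma balanced_kstar_enter g p T : (k + k <= nn g)%N -> (forall w, (p w < k)%N) ->
  (forall x y, edge g x y = kstar_edge k (nn g) p x y) -> balanced k (nn g) p ->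
  (T < k)%N -> (forall c, (c < k)%N -> (leaves k (nn g) p T <= leaves k (nn g) p c)%N) ->
  balanced_kstar k (enter g T).
Proof.
move=> N_ge2k p_lt HE [leaves_pos leaves_bal] HT Hmin.
exists (enter_map (nn g) p T).
have -> : nn (enter g T) = (nn g).+1 by [].
split.
- by lia.
- exact: enter_map_lt.
- exact: (edge_enter_center k_ge3 N_ge2k p_lt erefl HE HT).
- split=> [c Hc | c c' Hc Hc']; rewrite !(leaves_enter p k_ge3 N_ge2k _ HT).
    by have := leaves_pos c Hc; lia.
  have := leaves_bal c c' Hc Hc'; have := Hmin c Hc; have := Hmin c' Hc'.
  by case: (eqVneq T c) => [<-|?]; case: (eqVneq T c') => [<-|?] /=; lia.
Qed.

(* Every step from a balanced canonical k-star is an entry (the network is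
   stable, so no node moves), and the newcomer picks a center with fewest
   leaves; so the invariant is preserved. *)
Lemma balanced_kstar_step g g' : balanced_kstar k g -> step g g' -> balanced_kstar k g'.
Proof.
move=> Hinv [[unstable _]|[_ [T [[HT _] [_ [best ->]]]]]].
  by case: unstable; exact: balanced_kstar_stable.
case: Hinv => p [N_ge2k p_lt HE [leaves_pos leaves_bal]].
have [cs Hcs Hmin] := fewest_leaves (nn g) p (ltnW (ltnW k_ge3)).
have acc_cs := accepts_center k_ge3 N_ge2k p_lt erefl HE leaves_pos b32 b43 b4_pos
  c0_gt c0_lt Hcs.
have [_ only_fewest] := entry_value_best k_ge3 N_ge2k p_lt erefl HE leaves_pos
  b32 b43 b4_pos c0_gt c0_lt Hcs Hmin HT.
have [HTk LT] := only_fewest (best cs acc_cs).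
apply: balanced_kstar_enter HTk _ => // c Hc.
by rewrite LT; exact: Hmin.
Qed.

Lemma balanced_kstar_grow g : balanced_kstar k g ->
  exists g', step g g' /\ balanced_kstar k g' /\ nn g' = (nn g).+1.
Proof.
move=> Hinv; have stable := balanced_kstar_stable Hinv.
case: Hinv => p [N_ge2k p_lt HE [leaves_pos leaves_bal]].
have [cs Hcs Hmin] := fewest_leaves (nn g) p (ltnW (ltnW k_ge3)).
have acc := accepts_center k_ge3 N_ge2k p_lt erefl HE leaves_pos b32 b43 b4_pos c0_gt c0_lt.
have best := entry_value_best k_ge3 N_ge2k p_lt erefl HE leaves_pos b32 b43 b4_pos c0_gt c0_lt
  Hcs Hmin.
exists (enter g cs); split; last split.
- right; split=> //; exists cs; split; first exact: acc.
  split; first exact: (entry_value_center_pos k_ge3 N_ge2k p_lt erefl HE leaves_pos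
    b32 b43 b4_pos c0_gt c0_lt Hcs).
  by split=> // T [HT _]; have [] := best T HT.
- exact: balanced_kstar_enter N_ge2k p_lt HE (conj leaves_pos leaves_bal) Hcs Hmin.
- by [].
Qed.

Lemma balanced_kstar_reach g g' : clos_refl_trans net step g g' ->
  balanced_kstar k g -> balanced_kstar k g'.
Proof.
elim=> [x y Hs|x|x y z _ IH1 _ IH2] // Hinv; first exact: balanced_kstar_step Hs.
by apply: IH2; apply: IH1.
Qed.

Lemma balanced_kstar_grow_to g d : balanced_kstar k g ->
  exists g', clos_refl_trans net step g g' /\ balanced_kstar k g' /\ nn g' = (nn g + d)%N.
Proof.
elim: d => [|d IH] Hinv; first by exists g; split; [exact: rt_refl | rewrite addn0].
have [g1 [reach1 [Hinv1 Hn1]]] := IH Hinv.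
have [g2 [step12 [Hinv2 Hn2]]] := balanced_kstar_grow Hinv1.
exists g2; split; last by split => //; rewrite Hn2 Hn1 addnS.
exact: rt_trans reach1 (rt_step _ _ _ _ step12).
Qed.
End Process.

Unset Implicit Arguments.

Theorem theorem5 (R : realFieldType) (k : nat) (b : nat -> R) (c gam c0 : R) :
  (3 <= k)%N ->
  (forall i, (0 < i)%N -> 0 < b i) ->
  (forall i, (0 < i)%N -> b i.+1 < b i) ->
  gam = 0 ->
  c = b 1%N - b 3%N ->
  b 2%N - b 3%N < c0 -> c0 < b 2%N - b 4%N ->
  let reach := clos_refl_trans net (step b c gam c0) in
  (forall g, reach (kstar_base k) g -> pairwise_stable b c gam g -> is_kstar k g) /\
  (forall g, reach (kstar_base k) g -> forall n, (nn g <= n)%N ->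
     exists g', reach g g' /\ pairwise_stable b c gam g' /\ nn g' = n).
Proof.
move=> k_ge3 b_pos b_decr -> -> c0_gt c0_lt; cbv zeta.
have b32 : b 3%N < b 2%N := b_decr 2%N isT.
have b43 : b 4%N < b 3%N := b_decr 3%N isT.
have b4_pos : 0 < b 4%N := b_pos 4%N isT.
have inv g : clos_refl_trans net (step b (b 1%N - b 3%N) 0 c0) (kstar_base k) g ->
    balanced_kstar k g.
  move=> reach_g; apply: (balanced_kstar_reach k_ge3 b32 b43 b4_pos c0_gt c0_lt reach_g).
  exact: balanced_kstar_base (ltnW (ltnW k_ge3)).
split=> [g /inv Hinv _ | g /inv Hinv n Hn]; first exact: balanced_kstar_is_kstar k_ge3 Hinv.
have [g' [reach' [Hinv' Hn']]] :=
  balanced_kstar_grow_to k_ge3 b32 b43 b4_pos c0_gt c0_lt (n - nn g) Hinv.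
exists g'; split=> //; split.
  by have := balanced_kstar_stable k_ge3 b32 b43 b4_pos Hinv'; apply.
by rewrite Hn'; lia.
Qed.
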